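(* Let $\Gamma_M$ ($M>0$) be a family of nonatomic routing games with a single OD pair with demand $M$, sharing the same graph, path set and edge costs $(c_e)_{e\in\mathcal E}$, where each $c_e$ is analytic at $0$, i.e. coincides with a convergent power series $\sum_{k\ge 0}c_{k,e}x^k$ on some interval $[0,\delta_e)$, $\delta_e>0$. Then $\mathrm{PoA}(\Gamma_M)\to 1$ as $M\to 0$.
   Context: A nonatomic routing game with a single OD pair consists of a finite directed multigraph with edge set $\mathcal E$, a nonempty finite set $\mathcal P$ of paths from an origin to a destination, a demand $M>0$, and continuous nondecreasing edge costs $c_e:[0,\infty)\to[0,\infty)$. Feasible flows: $f\in\mathbb R_+^{\mathcal P}$ with $\sum_p f_p=M$; loads $x_e=\sum_{p\ni e}f_p$; path costs $c_p(f)=\sum_{e\in p}c_e(x_e)$. A Wardrop equilibrium is a feasible $f^*$ with $c_p(f^* )\le c_{p'}(f^* )$ whenever $f^*_p>0$. Social cost $L(x)=\sum_e x_ec_e(x_e)$; $\mathrm{Opt}$ is its minimum over feasible loads, $\mathrm{Eq}=L(x^* )$ at an equilibrium load, and $\mathrm{PoA}=\mathrm{Eq}/\mathrm{Opt}$; it is assumed that $\mathrm{Opt}>0$ (otherwise $\mathrm{PoA}:=1$). *)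

From HB Require Import structures.
From mathcomp Require Import all_boot all_order all_algebra.
From mathcomp Require Import all_classical all_reals all_analysis.
Set Implicit Arguments. Unset Strict Implicit. Unset Printing Implicit Defensive.
Import Order.TTheory GRing.Theory Num.Theory.
Import numFieldNormedType.Exports.
Local Open Scope classical_set_scope.
Local Open Scope ring_scope.

Section Routing.
Variables (R : realType) (V E P : finType).
Variables (tail head : E -> V) (orig dest : V).
Variable pe : P -> seq E.
Variable c : E -> R -> R.

Fixpoint walk_from (v : V) (es : seq E) : bool :=
  if es is e :: es' then (tail e == v) && walk_from (head e) es' else true.

Definition is_od_path (es : seq E) : bool :=
  [&& es != [::], walk_from orig es,
      last orig (map head es) == dest & uniq (orig :: map head es)].

Definition valid_paths : Prop :=
  [/\ (0 < #|P|)%N, injective pe & forall p, is_od_path (pe p)].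

Definition admissible_cost (ce : R -> R) : Prop :=
  [/\ {within `[0, +oo[, continuous ce},
      {in `[0, +oo[ &, {homo ce : x y / x <= y}}
    & forall x, 0 <= x -> 0 <= ce x].

Definition analytic_at0 (ce : R -> R) : Prop :=
  exists (coef : nat -> R) (delta : R), 0 < delta /\
    forall x, 0 <= x < delta ->
      (fun n : nat => \sum_(0 <= k < n) coef k * x ^+ k) @ \oo --> ce x.

Definition feasible (M : R) (f : P -> R) : Prop :=
  (forall p, 0 <= f p) /\ \sum_(p : P) f p = M.

Definition load (f : P -> R) (e : E) : R := \sum_(p : P | e \in pe p) f p.

Definition path_cost (f : P -> R) (p : P) : R :=
  \sum_(e <- pe p) c e (load f e).

Definition wardrop_eq (M : R) (f : P -> R) : Prop :=
  feasible M f /\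
  forall p p', 0 < f p -> path_cost f p <= path_cost f p'.

Definition social_cost (f : P -> R) : R :=
  \sum_(e : E) load f e * c e (load f e).

(* optimal social cost over feasible flows (a minimum, attained by compactness) *)
Definition Opt (M : R) : R := inf [set social_cost f | f in feasible M].

Definition PoA (M : R) (f : P -> R) : R :=
  if 0 < Opt M then social_cost f / Opt M else 1.

End Routing.

From mathcomp Require Import all_boot all_order all_algebra.
From mathcomp Require Import all_classical all_reals all_analysis.
From mathcomp Require Import ring lra.
Import Order.TTheory GRing.Theory Num.Theory.
Import numFieldNormedType.Exports.
Local Open Scope classical_set_scope.
Local Open Scope ring_scope.
Set Implicit Arguments. Unset Strict Implicit. Unset Printing Implicit Defensive.

(* Near 0 every edge cost has a leading term, c_e x = a_e x^d_e (1 + o(1)) with a_e >= 0,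
   where a_e = 0 means that c_e vanishes near 0.  If some path only uses vanishing edges, the
   equilibrium cost is 0 for small demands and PoA = 1 by convention.  Otherwise let D be the
   largest degree such that some path has no positive edge of degree below D; call the positive
   edges of degree D critical and those of lower degree subcritical, and let critical_opt be
   the minimum of sum_(critical e) a_e x_e^(D+1) over unit flows avoiding subcritical edges.
   For a precision eta and a small enough demand M:
   - a flow sending more than eta M / (D+1) through subcritical edges pays at least
     critical_opt M^(D+1) there, and any other flow costs at least
     (1 - eta)^2 critical_opt M^(D+1);
   - testing the variational inequality of the equilibrium against M times a nearly optimal
     unit flow and applying Young's inequality (D+1) x y^D <= x^(D+1) + D y^(D+1) on critical
     edges bounds the equilibrium cost by (1 + O(eta)) critical_opt M^(D+1), edges of degree > D
     contributing O(eta M^(D+1)).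
   Hence 1 <= PoA <= 1 + O(eta) for small M. *)

Section LeadingTerm.
Variable R : realType.

Lemma geometric_sum_le (r : R) (m n : nat) : 0 <= r -> r <= 1/2 ->
  \sum_(m <= k < n) r ^+ k <= 2 * r ^+ m.
Proof.
move=> r0 r12; have rm_ge0 k : 0 <= r ^+ k by exact: exprn_ge0.
suff tele : (m <= n)%N -> \sum_(m <= k < n) r ^+ k <= 2 * r ^+ m - 2 * r ^+ n.
  have [mn|/ltnW nm] := leqP m n; last by rewrite big_geq // mulr_ge0.
  by apply: le_trans (tele mn) _; rewrite lerBlDr lerDl mulr_ge0.
elim: n => [|n IH]; first by rewrite leqn0 => /eqP ->; rewrite big_geq // subrr.
rewrite leq_eqVlt => /predU1P[<-|]; first by rewrite big_geq // subrr.
rewrite ltnS => mn; rewrite big_nat_recr //= exprS.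
have : r * r ^+ n <= 1/2 * r ^+ n by rewrite ler_wpM2r.
by have := IH mn; lra.
Qed.

Lemma power_series_tail_le (u : nat -> R) (x0 B x : R) (m n : nat) :
  0 < x0 -> (forall k, `|u k * x0 ^+ k| <= B) -> 0 <= x <= x0 / 2 ->
  `|\sum_(m <= k < n) u k * x ^+ k| <= 2 * B * (x / x0) ^+ m.
Proof.
move=> x0_gt0 uB /andP[x_ge0 x_le].
have r_ge0 : 0 <= x / x0 by rewrite divr_ge0 // ltW.
have r_le : x / x0 <= 1/2 by rewrite ler_pdivrMr //; lra.
have B_ge0 : 0 <= B by apply: le_trans (uB 0%N).
apply: le_trans (ler_norm_sum _ _ _) _.
apply: (@le_trans _ _ (\sum_(m <= k < n) B * (x / x0) ^+ k)).
  apply: ler_sum => k _.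
  have -> : u k * x ^+ k = (u k * x0 ^+ k) * (x / x0) ^+ k.
    by rewrite expr_div_n; field; rewrite expf_neq0 // gt_eqF.
  by rewrite normrM [`|_ ^+ k|]ger0_norm ?exprn_ge0 // ler_wpM2r ?exprn_ge0.
by rewrite -mulr_sumr (mulrC 2 B) -mulrA ler_wpM2l // geometric_sum_le.
Qed.

Lemma power_series_remainder (u : nat -> R) (f : R -> R) (delta : R) (d : nat) :
  0 < delta ->
  (forall x, 0 <= x < delta -> series (fun k => u k * x ^+ k) @ \oo --> f x) ->
  (forall k, (k < d)%N -> u k = 0) ->
  exists2 C, 0 <= C & exists2 rho, 0 < rho &
    forall x, 0 <= x < rho -> `|f x - u d * x ^+ d| <= C * x ^+ d.+1.
Proof.
move=> delta_gt0 f_series u_lt_d.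
pose x0 := delta / 2.
have x0_gt0 : 0 < x0 by rewrite divr_gt0.
have [B uB] : exists B, forall k, `|u k * x0 ^+ k| <= B.
  have : cvgn (series (fun k => u k * x0 ^+ k)).
    by apply/cvg_ex; exists (f x0); apply: f_series; rewrite ltW //= /x0; lra.
  move=> /cvg_series_cvg_0 u_to0; have /ex_bound := cvg_seq_bounded (cvgP _ u_to0).
  by case=> [|B uB]; [exact: (globally_properfilter (a := 0%N))|exists B => k; exact: uB].
have B_ge0 : 0 <= B by apply: le_trans (uB 0%N).
exists (2 * B / x0 ^+ d.+1); first by rewrite divr_ge0 ?mulr_ge0 ?exprn_ge0 // ltW.
exists (x0 / 2) => [|x /andP[x_ge0 x_lt]]; first by rewrite divr_gt0.
have x_delta : 0 <= x < delta by rewrite x_ge0 /=; rewrite /x0 in x_lt; lra.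
have dist_cvg : `|series (fun k => u k * x ^+ k) n - u d * x ^+ d| @[n --> \oo] -->
    `|f x - u d * x ^+ d|.
  by apply: cvg_norm; apply: cvgB; [exact: f_series|exact: cvg_cst].
apply: (cvgr_to_le dist_cvg).
near=> n.
have dn : (d < n)%N by near: n; exact: nbhs_infty_gt.
rewrite /series /= (big_cat_nat (n := d.+1)) //= big_nat_recr //= big1_seq ?add0r.
  rewrite addrAC subrr add0r -mulrA [_^-1 * _]mulrC -expr_div_n.
  apply: power_series_tail_le => //; rewrite x_ge0 /=; rewrite /x0 in x_lt *; lra.
by move=> k /andP[_]; rewrite mem_index_iota => /andP[_ /u_lt_d ->]; rewrite mul0r.
Unshelve. all: by end_near.
Qed.

(* With [a = 0] this says that [f] vanishes near 0. *)
Definition leading_term (f : R -> R) (a : R) (d : nat) : Prop :=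
  forall eta, 0 < eta -> exists2 rho, 0 < rho &
    forall y, 0 <= y < rho -> `|f y - a * y ^+ d| <= eta * a * y ^+ d.

Lemma leading_term_of_remainder (f : R -> R) (a C rho : R) (d : nat) :
  0 < a -> 0 <= C -> 0 < rho ->
  (forall x, 0 <= x < rho -> `|f x - a * x ^+ d| <= C * x ^+ d.+1) ->
  leading_term f a d.
Proof.
move=> a_gt0 C_ge0 rho_gt0 f_rem eta eta_gt0.
exists (Num.min rho (eta * a / (C + 1))) => [|y /andP[y_ge0]].
  by rewrite lt_min rho_gt0 /= divr_gt0 ?mulr_gt0 //; lra.
rewrite lt_min => /andP[y_rho]; rewrite ltr_pdivlMr; last lra.
move=> y_small; apply: le_trans (f_rem y _) _; first by rewrite y_ge0.
rewrite exprS mulrA ler_wpM2r ?exprn_ge0 //; nra.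
Qed.

Lemma remainder_coef_ge0 (f : R -> R) (a C rho : R) (d : nat) :
  0 <= C -> 0 < rho -> (forall x, 0 <= x -> 0 <= f x) ->
  (forall x, 0 <= x < rho -> `|f x - a * x ^+ d| <= C * x ^+ d.+1) -> 0 <= a.
Proof.
move=> C_ge0 rho_gt0 f_ge0 f_rem; rewrite leNgt; apply/negP => a_lt0.
pose x := Num.min (rho / 2) (- a / (2 * (C + 1))).
have x_gt0 : 0 < x by rewrite lt_min !divr_gt0 ?mulr_gt0 //; lra.
have Cx : C * x <= - a / 2.
  have : x <= - a / (2 * (C + 1)) by rewrite ge_min lexx orbT.
  rewrite ler_pdivlMr; last lra.
  nra.
have x_rho : 0 <= x < rho by rewrite ltW //= gt_min //; lra.
have xd_gt0 : 0 < x ^+ d by exact: exprn_gt0.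
have := le_trans (ler_norm _) (f_rem x x_rho); rewrite exprS mulrA.
have := f_ge0 x (ltW x_gt0); nra.
Qed.

Lemma analytic_leading_term (f : R -> R) :
  analytic_at0 f -> (forall x, 0 <= x -> 0 <= f x) ->
  exists a d, 0 <= a /\ leading_term f a d.
Proof.
move=> [u [delta [delta_gt0 f_series]]] f_ge0.
have [u0|/existsNP[k /eqP uk]] := pselect (forall k, u k = 0).
  exists 0, 0%N; split => // eta _; exists delta => // y y_delta.
  rewrite !(mul0r, mulr0) subr0; apply: (cvgr_to_le (cvg_norm (f_series y y_delta))).
  by apply: nearW => n; rewrite big1 ?normr0 // => i _; rewrite u0 mul0r.
have [d ud u_lt_d] := ex_minnP (ex_intro (fun k => u k != 0) k uk).
have u_below_d j : (j < d)%N -> u j = 0.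
  by move=> jd; apply/eqP; apply: contraTT jd => /u_lt_d; rewrite -leqNgt.
have [C C_ge0 [rho rho_gt0 f_rem]] := power_series_remainder delta_gt0 f_series u_below_d.
have a_gt0 : 0 < u d by rewrite lt_def ud (remainder_coef_ge0 C_ge0 rho_gt0 f_ge0 f_rem).
by exists (u d), d; split; [exact: ltW|exact: leading_term_of_remainder f_rem].
Qed.

Lemma analytic_leading_terms (I : Type) (f : I -> R -> R) :
  (forall i, analytic_at0 (f i)) -> (forall i x, 0 <= x -> 0 <= f i x) ->
  exists (a : I -> R) (d : I -> nat), forall i, 0 <= a i /\ leading_term (f i) (a i) (d i).
Proof.
move=> f_analytic f_ge0.
have /choice[ad ad_lead] i : exists ad : R * nat, 0 <= ad.1 /\ leading_term (f i) ad.1 ad.2.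
  by have [a [d ?]] := analytic_leading_term (f_analytic i) (f_ge0 i); exists (a, d).
by exists (fun i => (ad i).1), (fun i => (ad i).2).
Qed.

End LeadingTerm.

Section RealFacts.
Variable R : realType.

Lemma sumr_pred_le (I : finType) (Q : pred I) (F : I -> R) :
  (forall i, 0 <= F i) -> \sum_(i | Q i) F i <= \sum_i F i.
Proof. by move=> F_ge0; rewrite [leRHS](bigID Q) /= lerDl sumr_ge0. Qed.

Lemma young_pow (x y : R) (n : nat) : 0 <= x -> 0 <= y ->
  n.+1%:R * (x * y ^+ n) <= x ^+ n.+1 + n%:R * y ^+ n.+1.
Proof.
move=> x_ge0 y_ge0; elim: n => [|n IH].
  by rewrite !expr0 !expr1 mulr1 mul1r mul0r addr0.
have mono : 0 <= (x - y) * (x ^+ n.+1 - y ^+ n.+1).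
  have [xy|/ltW yx] := lerP x y.
    by rewrite mulr_le0 ?subr_le0 // lerXn2r.
  by rewrite mulr_ge0 ?subr_ge0 // lerXn2r.
have := ler_wpM2r y_ge0 IH; move: mono.
rewrite (exprS x n.+1) !(exprS y n.+1) (exprS y n) -!natr1.
set X := x ^+ n.+1; set Z := y ^+ n.
nra.
Qed.

Lemma exists_pos_lower_bound (I : finType) (Q : pred I) (F : I -> R) :
  (forall i, Q i -> 0 < F i) -> exists2 m, 0 < m & forall i, Q i -> m <= F i.
Proof.
move=> F_gt0; pose S := \sum_(i | Q i) (F i)^-1.
have S_ge0 : 0 <= S by apply: sumr_ge0 => i /F_gt0 /ltW; rewrite invr_ge0.
exists (1 + S)^-1 => [|i Qi]; first by rewrite invr_gt0; lra.
have Fi_gt0 := F_gt0 i Qi.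
have : (F i)^-1 <= S.
  by rewrite /S (bigD1 i) //= lerDl sumr_ge0 // => j /andP[/F_gt0/ltW]; rewrite invr_ge0.
by rewrite -[F i]invrK lef_pV2 ?posrE ?invr_gt0 //; lra.
Qed.

Lemma exists_large_term (I : finType) (Q : pred I) (x : I -> R) (s : R) :
  0 < s -> s <= \sum_(i | Q i) x i -> exists2 i, Q i & s <= #|I|%:R * x i.
Proof.
move=> s_gt0 s_le; have [//|no_large] := pselect (exists2 i, Q i & s <= #|I|%:R * x i).
have small i : Q i -> #|I|%:R * x i < s.
  by move=> Qi; rewrite ltNge; apply/negP => large; apply: no_large; exists i.
have [i Qi|Q0] := pickP Q; last by move: s_le; rewrite big_pred0 //; lra.
have : \sum_(i | Q i) #|I|%:R * x i < \sum_(i | Q i) s.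
  by apply: ltr_sum => //; apply/hasP; exists i; rewrite ?mem_index_enum.
rewrite -mulr_sumr sumr_const.
have : #|Q|%:R <= #|I|%:R :> R by rewrite ler_nat max_card.
have := ler_wpM2l (ler0n R #|I|) s_le.
nra.
Qed.

Lemma cvg_upper_envelope {T S : Type} (F : set_system T) (G : set_system S)
    {FF : Filter F} {PG : ProperFilter G} (u : T -> R) (w : S -> R) (l : R) :
  w @ G --> l -> (\forall s \near G, \forall t \near F, l <= u t <= w s) ->
  u @ F --> l.
Proof.
move=> w_l u_between; apply/cvgrPdist_le => e e_gt0.
have w_near : \forall s \near G, w s <= l + e by apply: cvgr_le w_l _ _; rewrite ltrDl.
have [s [/filterS u_near w_s]] := filter_ex (filterS2 _ (fun s a b => conj a b) u_between w_near).
apply: u_near => t /andP[lu uw]; rewrite ler_distlC; apply/andP; split; lra.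
Qed.

Lemma ratio_bound_cvg1 (K k : R) :
  (fun eta => ((1 + eta) ^+ 2 + K * eta) / ((1 - k * eta) * (1 - eta))) @ (0 : R)^'+ --> (1 : R).
Proof.
apply: cvg_at_right_filter.
have sq : (1 + eta) ^+ 2 @[eta --> (0 : R)] --> ((1 + 0) ^+ 2 : R).
  apply: (continuous_comp (f := fun eta : R => 1 + eta) (g := fun y => y ^+ 2)).
    by apply: cvgD; [exact: cvg_cst|exact: cvg_id].
  exact: exprn_continuous.
have num : (1 + eta) ^+ 2 + K * eta @[eta --> (0 : R)] --> ((1 + 0) ^+ 2 + K * 0 : R).
  by apply: cvgD => //; apply: cvgM; [exact: cvg_cst|exact: cvg_id].
have lin (b : R) : 1 - b * eta @[eta --> (0 : R)] --> (1 - b * 0 : R).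
  by apply: cvgB; [exact: cvg_cst|apply: cvgM; [exact: cvg_cst|exact: cvg_id]].
have den : (1 - k * eta) * (1 - eta) @[eta --> (0 : R)] --> ((1 - k * 0) * (1 - 1 * 0) : R).
  by under eq_fun do rewrite -[X in _ * (1 - X)]mul1r; apply: cvgM; exact: lin.
have den_ne0 : (1 - k * 0) * (1 - 1 * 0) != 0 :> R.
  by rewrite !(mulr0, subr0) mulr1 oner_neq0.
have := cvgM num (cvgV den_ne0 den).
rewrite !(mulr0, addr0, subr0) expr1n mulr1 invr1 mulr1; apply.
Qed.

End RealFacts.

Section Flows.
Variables (R : realType) (V E P : finType) (tail head : E -> V) (orig dest : V).
Variable pe : P -> seq E.

Lemma load_itv M (g : P -> R) e : feasible M g -> 0 <= load pe g e <= M.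
Proof. by case=> g_ge0 g_sum; rewrite sumr_ge0 //= -g_sum sumr_pred_le. Qed.

Lemma load_scale (k : R) (g : P -> R) e : load pe (fun p => k * g p) e = k * load pe g e.
Proof. by rewrite /load mulr_sumr. Qed.

Lemma sum_load_mul (g : P -> R) (w : E -> R) :
  \sum_e load pe g e * w e = \sum_p g p * \sum_(e in pe p) w e.
Proof.
rewrite /load; under eq_bigr do rewrite big_distrl /= big_mkcond /=.
rewrite exchange_big /=; apply: eq_bigr => p _.
rewrite mulr_sumr [RHS]big_mkcond /=; apply: eq_bigr => e _.
by case: ifP; rewrite ?mul0r ?mulr0.
Qed.

Definition path_flow (M : R) (p : P) : P -> R := fun q => M * (q == p)%:R.

Lemma path_flow_feasible M p : 0 <= M -> feasible M (path_flow M p).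
Proof.
move=> M_ge0; split=> [q|]; first by rewrite mulr_ge0.
by rewrite -mulr_sumr (bigD1 p) //= eqxx big1 ?addr0 ?mulr1 // => q /negbTE ->.
Qed.

Lemma load_path_flow M p e : load pe (path_flow M p) e = M * (e \in pe p)%:R.
Proof.
rewrite /load /path_flow -mulr_sumr big_mkcond (bigD1 p) //= eqxx big1 ?addr0.
  by case: (e \in pe p).
by move=> q /negbTE ->; case: ifP.
Qed.

Lemma sum_has_le_sum_load (S : pred E) (g : P -> R) : (forall p, 0 <= g p) ->
  \sum_(p | has S (pe p)) g p <= \sum_(e | S e) load pe g e.
Proof.
move=> g_ge0.
have -> : \sum_(e | S e) load pe g e = \sum_e load pe g e * (S e)%:R.
  by rewrite big_mkcond; apply: eq_bigr => e _; case: (S e); rewrite ?mulr1 ?mulr0.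
rewrite sum_load_mul big_mkcond /=; apply: ler_sum => p _.
case: ifPn => [/hasP[e e_p Se]|_]; last by rewrite mulr_ge0 ?sumr_ge0.
by rewrite -[leLHS]mulr1 ler_wpM2l // (bigD1 e) //= Se lerDl sumr_ge0.
Qed.

Variable c : E -> R -> R.
Hypothesis paths_ok : valid_paths tail head orig dest pe.

Lemma path_cost_mem (f : P -> R) p :
  path_cost pe c f p = \sum_(e in pe p) c e (load pe f e).
Proof.
have [_ _ /(_ p)/and4P[_ _ _]] := paths_ok; rewrite /= => /andP[_ /map_uniq uniq_p].
by rewrite /path_cost big_uniq.
Qed.

Lemma social_cost_paths (f : P -> R) :
  social_cost pe c f = \sum_p f p * path_cost pe c f p.
Proof. by rewrite /social_cost sum_load_mul; under [RHS]eq_bigr do rewrite path_cost_mem. Qed.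

Lemma wardrop_social_cost_le M (f g : P -> R) : 0 < M ->
  wardrop_eq pe c M f -> feasible M g ->
  social_cost pe c f <= \sum_e load pe g e * c e (load pe f e).
Proof.
move=> M_gt0 [[f_ge0 f_sum] f_wardrop] [g_ge0 g_sum].
have [p0 fp0_gt0] : exists p0, 0 < f p0.
  apply/not_existsP => f_le0; suff : \sum_p f p = 0 by lra.
  by apply: big1 => p _; apply/eqP; rewrite eq_le f_ge0 andbT leNgt; apply/negP/f_le0.
pose lam := path_cost pe c f p0.
have eq_cost p : f p * path_cost pe c f p = f p * lam.
  have [fp0|fp_gt0] := eqVneq (f p) 0; first by rewrite fp0 !mul0r.
  have fp_pos : 0 < f p by rewrite lt_def fp_gt0 f_ge0.
  by rewrite /lam; congr (_ * _); apply/le_anti; rewrite !f_wardrop.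
rewrite social_cost_paths (eq_bigr _ (fun p _ => eq_cost p)) -mulr_suml f_sum -g_sum mulr_suml.
rewrite sum_load_mul; apply: ler_sum => p _.
by rewrite -path_cost_mem ler_wpM2l ?f_wardrop.
Qed.

Hypothesis cost_ge0 : forall e x, 0 <= x -> 0 <= c e x.

Lemma social_cost_ge0 M (g : P -> R) : feasible M g -> 0 <= social_cost pe c g.
Proof.
move=> g_feas; apply: sumr_ge0 => e _; have /andP[load_ge0 _] := load_itv e g_feas.
by rewrite mulr_ge0 ?cost_ge0.
Qed.

Lemma Opt_le M (g : P -> R) : feasible M g -> Opt pe c M <= social_cost pe c g.
Proof.
move=> g_feas; apply: ge_inf; last by exists g.
by exists 0 => _ [h h_feas <-]; exact: social_cost_ge0 h_feas.
Qed.

Lemma Opt_ge M (b : R) (g0 : P -> R) : feasible M g0 ->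
  (forall g, feasible M g -> b <= social_cost pe c g) -> b <= Opt pe c M.
Proof.
move=> g0_feas b_le; apply: lb_le_inf; first by exists (social_cost pe c g0), g0.
by move=> _ [g g_feas <-]; exact: b_le.
Qed.

Lemma PoA_ge1 M (f : P -> R) : wardrop_eq pe c M f -> 1 <= PoA pe c M f.
Proof.
move=> [f_feas _]; rewrite /PoA; case: ifP => // Opt_gt0.
by rewrite ler_pdivlMr // mul1r Opt_le.
Qed.

Lemma PoA_le M (f : P -> R) (b : R) : wardrop_eq pe c M f -> 0 < b ->
  (forall g, feasible M g -> b <= social_cost pe c g) ->
  PoA pe c M f <= social_cost pe c f / b.
Proof.
move=> [f_feas _] b_gt0 b_le; have b_Opt := Opt_ge f_feas b_le.
have Opt_gt0 := lt_le_trans b_gt0 b_Opt.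
by rewrite /PoA Opt_gt0 ler_wpM2l ?(social_cost_ge0 f_feas) // lef_pV2 ?posrE.
Qed.

Lemma PoA_eq1 M (f : P -> R) : wardrop_eq pe c M f -> social_cost pe c f <= 0 ->
  PoA pe c M f = 1.
Proof.
move=> [f_feas _] f_le0; rewrite /PoA ltNge (le_trans (Opt_le f_feas) f_le0) //.
Qed.

End Flows.

Section LightTraffic.
Variables (R : realType) (V E P : finType) (tail head : E -> V) (orig dest : V).
Variables (pe : P -> seq E) (c : E -> R -> R).
Hypothesis paths_ok : valid_paths tail head orig dest pe.
Hypothesis cost_ge0 : forall e x, 0 <= x -> 0 <= c e x.
Variables (a : E -> R) (d : E -> nat).
Hypothesis a_ge0 : forall e, 0 <= a e.
Hypothesis c_leading : forall e, leading_term (c e) (a e) (d e).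

Definition close_to_leading (eta M : R) : Prop :=
  M <= 1 /\ forall e, a e * M <= eta /\
    forall y, 0 <= y <= M -> `|c e y - a e * y ^+ d e| <= eta * a e * y ^+ d e.

Lemma close_to_leading_near eta : 0 < eta ->
  \forall M \near (0 : R)^'+, close_to_leading eta M.
Proof.
move=> eta_gt0.
have edge_close e : \forall M \near (0 : R)^'+, a e * M <= eta /\
    forall y, 0 <= y <= M -> `|c e y - a e * y ^+ d e| <= eta * a e * y ^+ d e.
  have [rho rho_gt0 rho_close] := c_leading e eta_gt0.
  have a1_gt0 : 0 < a e + 1 by have := a_ge0 e; lra.
  near=> M; split.
    have : M < eta / (a e + 1) by near: M; apply: nbhs_right_lt; rewrite divr_gt0.
    by rewrite ltr_pdivlMr // => M_lt; have := a_ge0 e; nra.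
  have M_rho : M < rho by near: M; exact: nbhs_right_lt.
  by move=> y /andP[y_ge0 y_le]; apply: rho_close; rewrite y_ge0 (le_lt_trans y_le).
by apply: filterS2 _ (nbhs_right_le ltr01) (filter_forall _ edge_close) => M M_le1 close_M.
Unshelve. all: by end_near.
Qed.

Section CloseToLeading.
Variables (eta M : R).
Hypothesis close : close_to_leading eta M.

Lemma cost_le_leading e y : 0 <= y <= M -> c e y <= (1 + eta) * a e * y ^+ d e.
Proof.
move=> /(close.2 e).2; rewrite ler_norml mulrDl mul1r; lra.
Qed.

Lemma cost_ge_leading e y : 0 <= y <= M -> (1 - eta) * a e * y ^+ d e <= c e y.
Proof.
move=> /(close.2 e).2; rewrite ler_norml mulrBl mul1r; lra.
Qed.

Lemma free_path_social_cost_le0 p (f : P -> R) : (forall e, e \in pe p -> a e = 0) ->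
  0 < M -> wardrop_eq pe c M f -> social_cost pe c f <= 0.
Proof.
move=> p_free M_gt0 f_eq; have p_feas := path_flow_feasible p (ltW M_gt0).
apply: le_trans (wardrop_social_cost_le paths_ok M_gt0 f_eq p_feas) _.
apply: sumr_le0 => e _; rewrite load_path_flow.
have [e_p|] := boolP (e \in pe p); last by rewrite mulr0 mul0r.
rewrite mulr1; apply: mulr_ge0_le0; first exact: ltW.
by apply: le_trans (cost_le_leading e (load_itv pe e f_eq.1)) _; rewrite p_free // mulr0 mul0r.
Qed.

End CloseToLeading.

Theorem PoA_free_path_cvg p (feq : R -> P -> R) : ~~ has (fun e => 0 < a e) (pe p) ->
  (forall M, 0 < M -> wardrop_eq pe c M (feq M)) ->
  (fun M => PoA pe c M (feq M)) @ (0 : R)^'+ --> (1 : R).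
Proof.
move=> p_free feq_eq.
have a0 e : e \in pe p -> a e = 0.
  move=> e_p; apply/le_anti; rewrite a_ge0 leNgt andbT.
  by apply: contra p_free => a_pos; apply/hasP; exists e.
apply: cvg_trans (near_eq_cvg _) (cvg_cst _); near=> M.
have M_gt0 : 0 < M by near: M; exact: nbhs_right_gt.
have close : close_to_leading 1 M by near: M; exact: close_to_leading_near.
have f_eq := feq_eq M M_gt0.
by rewrite (PoA_eq1 cost_ge0 f_eq (free_path_social_cost_le0 close a0 M_gt0 f_eq)).
Unshelve. all: by end_near.
Qed.

Lemma critical_degree_exists :
  (forall p, has (fun e => 0 < a e) (pe p)) ->
  exists D pstar, (forall e, e \in pe pstar -> 0 < a e -> (D <= d e)%N) /\
    (forall p, exists2 e, e \in pe p & (0 < a e) && (d e <= D)%N).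
Proof.
move=> has_pos.
pose deg_above n := [exists p, all (fun e => (0 < a e) ==> (n <= d e)%N) (pe p)].
have [p0 _] : exists p0 : P, True by case: paths_ok => /card_gt0P[p _] _ _; exists p.
have deg_above0 : deg_above 0%N by apply/existsP; exists p0; apply/allP => e _; apply/implyP.
have deg_above_le n : deg_above n -> (n <= \sum_e d e)%N.
  case/existsP => p /allP p_deg; have /hasP[e e_p e_pos] := has_pos p.
  by apply: leq_trans (implyP (p_deg e e_p) e_pos) _; rewrite (bigD1 e) //= leq_addr.
have [D /existsP[pstar /allP pstar_deg] D_max] :=
  ex_maxnP (ex_intro deg_above 0%N deg_above0) deg_above_le.
exists D, pstar; split=> [e e_p e_pos|p]; first exact: implyP (pstar_deg e e_p) e_pos.
have : ~~ deg_above D.+1 by apply/negP => /D_max; rewrite ltnn.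
rewrite negb_exists => /forallP /(_ p) /allPn [e e_p].
by rewrite negb_imply -ltnNge ltnS; exists e.
Qed.

Section Critical.
Variables (D : nat) (pstar : P).
Hypothesis pstar_deg : forall e, e \in pe pstar -> 0 < a e -> (D <= d e)%N.
Hypothesis path_deg : forall p, exists2 e, e \in pe p & (0 < a e) && (d e <= D)%N.

Definition critical e := (0 < a e) && (d e == D).
Definition subcritical e := (0 < a e) && (d e < D)%N.
Definition critical_cost (g : P -> R) := \sum_(e | critical e) a e * load pe g e ^+ D.+1.
Definition subcritical_mass (g : P -> R) := \sum_(p | has subcritical (pe p)) g p.
Definition avoids_subcritical (M : R) (g : P -> R) :=
  feasible M g /\ forall p, has subcritical (pe p) -> g p = 0.
Definition critical_opt : R := inf [set critical_cost g | g in avoids_subcritical 1].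

Lemma critical_cost_ge0 (g : P -> R) : (forall p, 0 <= g p) -> 0 <= critical_cost g.
Proof. by move=> g_ge0; apply: sumr_ge0 => e _; rewrite mulr_ge0 ?exprn_ge0 ?sumr_ge0. Qed.

Lemma critical_cost_scale (k : R) (g : P -> R) :
  critical_cost (fun p => k * g p) = k ^+ D.+1 * critical_cost g.
Proof.
by rewrite /critical_cost mulr_sumr; apply: eq_bigr => e _; rewrite load_scale exprMn mulrCA.
Qed.

Lemma avoids_subcritical_scale (k M : R) (g : P -> R) : 0 <= k ->
  avoids_subcritical M g -> avoids_subcritical (k * M) (fun p => k * g p).
Proof.
move=> k_ge0 [[g_ge0 g_sum] g_avoid]; split; first split.
- by move=> p; rewrite mulr_ge0.
- by rewrite -mulr_sumr g_sum.
by move=> p p_sub; rewrite g_avoid ?mulr0.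
Qed.

Lemma avoids_subcritical_pstar : avoids_subcritical 1 (path_flow 1 pstar).
Proof.
split=> [|p /hasP[e e_p /andP[e_pos e_lt]]]; first exact: path_flow_feasible.
rewrite /path_flow; case: eqP => [p_star|]; last by rewrite mulr0.
by move: e_lt; rewrite ltnNge pstar_deg // -p_star.
Qed.

Lemma avoids_subcritical_load M (g : P -> R) e :
  avoids_subcritical M g -> subcritical e -> load pe g e = 0.
Proof. by move=> [_ g_avoid] e_sub; apply: big1 => p e_p; apply: g_avoid; apply/hasP; exists e. Qed.

Lemma critical_mass_ge M (g : P -> R) :
  avoids_subcritical M g -> M <= \sum_(e | critical e) load pe g e.
Proof.
move=> [[g_ge0 g_sum] g_avoid]; apply: le_trans (sum_has_le_sum_load _ _ g_ge0).
rewrite -g_sum (bigID (fun p => has critical (pe p))) /= [X in _ + X]big1 ?addr0 // => p p_crit.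
apply: g_avoid; have [e e_p /andP[e_pos e_le]] := path_deg p; apply/hasP; exists e => //.
rewrite /subcritical e_pos ltn_neqAle e_le andbT; apply: contraNN p_crit => /eqP de.
by apply/hasP; exists e => //; rewrite /critical e_pos de eqxx.
Qed.

Lemma card_E_gt0 : 0 < #|E|%:R :> R.
Proof. by have [e _ _] := path_deg pstar; rewrite ltr0n; apply/card_gt0P; exists e. Qed.

Lemma subcritical_load_ge M (g : P -> R) : feasible M g -> 0 < subcritical_mass g ->
  (subcritical_mass g / #|E|%:R) ^+ D <= \sum_(e | subcritical e) load pe g e ^+ D.
Proof.
move=> g_feas mass_gt0; have [g_ge0 _] := g_feas.
have [e e_sub e_large] := exists_large_term mass_gt0 (sum_has_le_sum_load _ _ g_ge0).
have E_gt0 := card_E_gt0.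
apply: le_trans (_ : load pe g e ^+ D <= _).
  by apply: lerXn2r; rewrite ?nnegrE ?divr_ge0 ?sumr_ge0 ?ler_pdivrMr // 1?mulrC // ltW.
by rewrite (bigD1 e) //= lerDl sumr_ge0 // => i _; rewrite exprn_ge0 ?sumr_ge0.
Qed.

Variable am : R.
Hypothesis am_gt0 : 0 < am.
Hypothesis am_le : forall e, 0 < a e -> am <= a e.

Lemma critical_opt_has_inf : has_inf [set critical_cost g | g in avoids_subcritical 1].
Proof.
split; first by exists (critical_cost (path_flow 1 pstar)), (path_flow 1 pstar);
  first exact: avoids_subcritical_pstar.
by exists 0 => _ [g [[g_ge0 _] _] <-]; exact: critical_cost_ge0.
Qed.

Lemma critical_opt_gt0 : 0 < critical_opt.
Proof.
have E_gt0 := card_E_gt0.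
apply: (@lt_le_trans _ _ (am / #|E|%:R ^+ D.+1)); first by rewrite divr_gt0 ?exprn_gt0.
apply: lb_le_inf; first exact: critical_opt_has_inf.1.
move=> _ [g g_avoid <-]; have [[g_ge0 _] _] := g_avoid.
have [e' e'_crit e'_load] := exists_large_term ltr01 (critical_mass_ge g_avoid).
have e'_pos : 0 < a e' by case/andP: e'_crit.
apply: le_trans (_ : a e' * load pe g e' ^+ D.+1 <= _); last first.
  rewrite /critical_cost (bigD1 e') //= lerDl.
  by apply: sumr_ge0 => i /andP[/andP[/ltW ? _] _]; rewrite mulr_ge0 ?exprn_ge0 ?sumr_ge0.
have load_ge : 1 / #|E|%:R <= load pe g e' by rewrite ler_pdivrMr // mulrC.
have inv_ge0 : 0 <= 1 / #|E|%:R :> R by rewrite divr_ge0.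
rewrite -exprVn -div1r ler_pM ?exprn_ge0 ?am_le //; first exact: ltW.
by rewrite lerXn2r // nnegrE (le_trans inv_ge0).
Qed.

Lemma critical_opt_le M (g : P -> R) : 0 <= M -> avoids_subcritical M g ->
  critical_opt * M ^+ D.+1 <= critical_cost g.
Proof.
move=> M_ge0 g_avoid; have [[g_ge0 _] _] := g_avoid.
have [->|M_neq0] := eqVneq M 0; first by rewrite expr0n mulr0 critical_cost_ge0.
have M_gt0 : 0 < M by rewrite lt_def M_neq0.
have /(avoids_subcritical_scale (k := M^-1)) : avoids_subcritical M g := g_avoid.
rewrite mulVf // invr_ge0 => /(_ M_ge0) g1_avoid.
have := ge_inf critical_opt_has_inf.2 (ex_intro2 _ _ _ g1_avoid erefl).
by rewrite critical_cost_scale exprVn -ler_pdivlMr ?exprn_gt0 // mulrC.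
Qed.

Lemma critical_opt_approx eta : 0 < eta ->
  exists2 g, avoids_subcritical 1 g & critical_cost g <= (1 + eta) * critical_opt.
Proof.
move=> eta_gt0; have opt_gt0 := critical_opt_gt0.
have [_ [g g_avoid <-] g_lt] := inf_adherent (mulr_gt0 eta_gt0 opt_gt0) critical_opt_has_inf.
by exists g => //; rewrite -/critical_opt in g_lt; apply: ltW; lra.
Qed.

Lemma critical_cost_ge_mass M (g : P -> R) : feasible M g ->
  critical_opt * (M ^+ D.+1 - D.+1%:R * subcritical_mass g * M ^+ D) <= critical_cost g.
Proof.
move=> [g_ge0 g_sum]; set t := subcritical_mass g.
have t_le : t <= M by rewrite -g_sum sumr_pred_le.
have M_ge0 : 0 <= M by rewrite -g_sum sumr_ge0.
pose g' p := if has subcritical (pe p) then 0 else g p.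
have g'_ge0 p : 0 <= g' p by rewrite /g'; case: ifP.
have g'_avoid : avoids_subcritical (M - t) g'.
  split=> [|p]; last by rewrite /g' => ->.
  split=> //; rewrite -g_sum [in RHS](bigID (fun p => has subcritical (pe p))) /=.
  rewrite -/(subcritical_mass g) -/t addrAC subrr add0r [RHS]big_mkcond.
  by apply: eq_bigr => p _; rewrite /g'; case: ifP.
have g'_le : critical_cost g' <= critical_cost g.
  apply: ler_sum => e /andP[/ltW a_ge _]; apply: ler_wpM2l => //.
  apply: lerXn2r; rewrite ?nnegrE ?sumr_ge0 //.
  by apply: ler_sum => p _; rewrite /g'; case: ifP.
have Mt_ge0 : 0 <= M - t by rewrite subr_ge0.
have bernoulli : M ^+ D.+1 - D.+1%:R * t * M ^+ D <= (M - t) ^+ D.+1.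
  by have := young_pow D Mt_ge0 M_ge0; rewrite !exprS -natr1; lra.
apply: le_trans (le_trans (critical_opt_le Mt_ge0 g'_avoid) g'_le).
by apply: ler_wpM2l; first exact: ltW critical_opt_gt0.
Qed.

(* Below this demand, a flow sending [eta * M / D.+1] through subcritical edges already pays
   more than [critical_opt * M ^+ D.+1] on them. *)
Definition subcritical_threshold (eta : R) :=
  am * (eta / (D.+1 * #|E|)%:R) ^+ D / critical_opt.

Section Bounds.
Variables (eta M : R).
Hypothesis close : close_to_leading eta M.
Hypotheses (eta_gt0 : 0 < eta) (eta_le1 : eta <= 1) (M_gt0 : 0 < M).

Lemma social_cost_ge_critical (g : P -> R) : feasible M g ->
  (1 - eta) * (critical_cost g + am * \sum_(e | subcritical e) load pe g e ^+ D)
    <= social_cost pe c g.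
Proof.
move=> g_feas; rewrite /critical_cost mulr_sumr [X in _ * (X + _)]big_mkcond.
rewrite [X in _ * (_ + X)]big_mkcond -big_split mulr_sumr.
apply: ler_sum => e _ /=; set y := load pe g e.
have y_itv : 0 <= y <= M := load_itv pe e g_feas.
have [y_ge0 y_le1] : 0 <= y /\ y <= 1 by case/andP: y_itv => ? /le_trans ->; last exact: close.1.
have yc_ge0 : 0 <= y * c e y by rewrite mulr_ge0 ?cost_ge0.
have leading_le : (1 - eta) * (a e * y ^+ (d e).+1) <= y * c e y.
  have -> : (1 - eta) * (a e * y ^+ (d e).+1) = y * ((1 - eta) * a e * y ^+ d e).
    by rewrite exprS; ring.
  exact: ler_wpM2l (cost_ge_leading close e y_itv).
rewrite /critical /subcritical; case: (ltrP 0 (a e)) => [a_pos|]; last by rewrite !addr0 mulr0.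
case: ltngtP => [d_lt|_|<-] /=; [|by rewrite addr0 mulr0|by rewrite addr0].
rewrite add0r; apply: le_trans leading_le; rewrite ler_wpM2l ?subr_ge0 //.
by apply: ler_pM; [exact: ltW|exact: exprn_ge0|exact: am_le|exact: ler_wiXn2l].
Qed.

Lemma critical_cost_penalized_ge (g : P -> R) : feasible M g ->
  M <= subcritical_threshold eta ->
  (1 - eta) * critical_opt * M ^+ D.+1 <=
    critical_cost g + am * \sum_(e | subcritical e) load pe g e ^+ D.
Proof.
move=> g_feas; have [g_ge0 _] := g_feas; have opt_gt0 := critical_opt_gt0.
rewrite ler_pdivlMr // => M_small.
have cost_ge := critical_cost_ge_mass g_feas; set t := subcritical_mass g in cost_ge.
have penalty_ge0 : 0 <= am * \sum_(e | subcritical e) load pe g e ^+ D.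
  by rewrite mulr_ge0 ?sumr_ge0 // => [|e _]; [exact: ltW|rewrite exprn_ge0 ?sumr_ge0].
have [t_small|t_large] := lerP (D.+1%:R * t) (eta * M).
  have : critical_opt * (D.+1%:R * t * M ^+ D) <= critical_opt * (eta * M ^+ D.+1).
    apply: ler_wpM2l; first exact: ltW.
    by rewrite exprS mulrA ler_wpM2r // exprn_ge0 // ltW.
  lra.
have t_gt0 : 0 < t.
  have : 0 < eta * M by exact: mulr_gt0.
  have : 0 < D.+1%:R :> R by rewrite ltr0n.
  nra.
have load_ge := subcritical_load_ge g_feas t_gt0; rewrite -/t in load_ge.
have DE_gt0 : 0 < (D.+1 * #|E|)%:R :> R by rewrite natrM mulr_gt0 ?card_E_gt0 ?ltr0n.
have mass_ge : eta / (D.+1 * #|E|)%:R * M <= t / #|E|%:R.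
  rewrite mulrAC natrM invfM mulrA ler_wpM2r ?invr_ge0 // ler_pdivrMr ?ltr0n //.
  by rewrite [t * _]mulrC ltW.
have := ler_wpM2r (exprn_ge0 D (ltW M_gt0)) M_small.
have : am * (eta / (D.+1 * #|E|)%:R * M) ^+ D <= am * \sum_(e | subcritical e) load pe g e ^+ D.
  apply: ler_wpM2l; first exact: ltW.
  apply: le_trans load_ge; apply: lerXn2r => //; rewrite nnegrE.
    by rewrite !mulr_ge0 ?invr_ge0 // ltW.
  by rewrite divr_ge0 // ltW.
have := critical_cost_ge0 g_ge0.
have : 0 <= eta * critical_opt * M ^+ D.+1 by rewrite !mulr_ge0 ?exprn_ge0 // ltW.
rewrite exprMn mulrA exprS; lra.
Qed.

Lemma social_cost_ge_opt (g : P -> R) : feasible M g -> M <= subcritical_threshold eta ->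
  (1 - eta) ^+ 2 * critical_opt * M ^+ D.+1 <= social_cost pe c g.
Proof.
move=> g_feas M_small; apply: le_trans (social_cost_ge_critical g_feas).
rewrite expr2 -!mulrA ler_wpM2l ?subr_ge0 // !mulrA.
exact: critical_cost_penalized_ge.
Qed.

Lemma critical_edge_cost_le e (x y : R) : critical e -> 0 <= x -> 0 <= y <= M ->
  x * c e y <= (1 + eta) / D.+1%:R * (a e * x ^+ D.+1 + D%:R * (a e * y ^+ D.+1)).
Proof.
move=> /andP[a_pos /eqP de] x_ge0 y_itv; have y_ge0 := (andP y_itv).1.
apply: le_trans (ler_wpM2l x_ge0 (cost_le_leading close e y_itv)) _; rewrite de.
have young := young_pow D x_ge0 y_ge0.
have -> : x * ((1 + eta) * a e * y ^+ D) = (1 + eta) * a e / D.+1%:R * (D.+1%:R * (x * y ^+ D)).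
  by field; rewrite addrC natr1 pnatr_eq0.
have -> : (1 + eta) / D.+1%:R * (a e * x ^+ D.+1 + D%:R * (a e * y ^+ D.+1)) =
    (1 + eta) * a e / D.+1%:R * (x ^+ D.+1 + D%:R * y ^+ D.+1) by ring.
by apply: ler_wpM2l young; rewrite divr_ge0 // mulr_ge0 // addr_ge0 // ltW.
Qed.

Lemma noncritical_edge_cost_le e (x y : R) : ~~ critical e -> ~~ subcritical e ->
  0 <= x <= M -> 0 <= y <= M -> x * c e y <= 2 * eta * M ^+ D.+1.
Proof.
move=> e_ncrit e_nsub /andP[x_ge0 x_le] y_itv; have /andP[y_ge0 y_le] := y_itv.
have M_le1 := close.1; have [aM_le _] := close.2 e.
have c_le := cost_le_leading close e y_itv.
have [a_pos|a_le0] := ltrP 0 (a e); last first.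
  have a0 : a e = 0 by apply/le_anti; rewrite a_le0 a_ge0.
  move: c_le; rewrite a0 mulr0 mul0r => c_le0.
  by rewrite (le_trans (mulr_ge0_le0 x_ge0 c_le0)) // !mulr_ge0 ?exprn_ge0 ?ltW.
have d_gt : (D < d e)%N.
  by move: e_ncrit e_nsub; rewrite /critical /subcritical a_pos /= => /negbTE; case: ltngtP.
have yd_le : y ^+ d e <= M ^+ D.+1.
  apply: le_trans (ler_wiXn2l y_ge0 (le_trans y_le M_le1) d_gt) _.
  by apply: lerXn2r; rewrite ?nnegrE // ltW.
have c_le2 : c e y <= 2 * a e * M ^+ D.+1.
  apply: le_trans c_le _; rewrite -!mulrA; apply: ler_pM; rewrite ?mulr_ge0 ?exprn_ge0 //.
  - by have := eta_gt0; lra.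
  - by have := eta_le1; lra.
  - by apply: ler_pM; rewrite ?exprn_ge0 //; exact: ltW.
apply: le_trans (ler_pM x_ge0 (cost_ge0 e y_ge0) x_le c_le2) _.
have S_ge0 : 0 <= M ^+ D.+1 by rewrite exprn_ge0 // ltW.
have := ler_wpM2r S_ge0 aM_le; rewrite mulrCA !mulrA; nra.
Qed.

Lemma wardrop_cost_le_critical (f g : P -> R) :
  wardrop_eq pe c M f -> avoids_subcritical M g ->
  social_cost pe c f <= (1 + eta) / D.+1%:R * (critical_cost g + D%:R * critical_cost f)
                        + 2 * #|E|%:R * eta * M ^+ D.+1.
Proof.
move=> f_eq g_avoid; have g_feas := g_avoid.1.
apply: le_trans (wardrop_social_cost_le paths_ok M_gt0 f_eq g_feas) _.
have load_g e := load_itv pe e g_feas; have load_f e := load_itv pe e f_eq.1.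
rewrite (bigID critical) /=; apply: lerD.
  rewrite /critical_cost [D%:R * _]mulr_sumr -big_split /= mulr_sumr.
  apply: ler_sum => e e_crit; apply: critical_edge_cost_le => //.
  by case/andP: (load_g e).
have bound_ge0 : 0 <= 2 * eta * M ^+ D.+1 by rewrite !mulr_ge0 ?exprn_ge0 // ltW.
apply: le_trans (_ : \sum_(e | ~~ critical e) 2 * eta * M ^+ D.+1 <= _).
  apply: ler_sum => e e_ncrit; have [e_sub|e_nsub] := boolP (subcritical e).
    by rewrite (avoids_subcritical_load g_avoid e_sub) mul0r.
  exact: noncritical_edge_cost_le.
rewrite (le_trans (sumr_pred_le _ (fun=> bound_ge0))) // sumr_const -mulr_natl.
by rewrite le_eqVlt; apply/orP; left; apply/eqP; ring.
Qed.

Lemma equilibrium_cost_le (f : P -> R) : wardrop_eq pe c M f ->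
  (1 - (2 * D%:R + 1) * eta) * social_cost pe c f <=
    (1 - eta) * ((1 + eta) ^+ 2 * critical_opt + 2 * (D%:R + 1) * #|E|%:R * eta) * M ^+ D.+1.
Proof.
move=> f_eq; have [g1 g1_avoid g1_le] := critical_opt_approx eta_gt0.
have g_avoid := avoids_subcritical_scale (ltW M_gt0) g1_avoid; rewrite mulr1 in g_avoid.
have [f_ge0 _] := f_eq.1.
have f_crit : (1 - eta) * critical_cost f <= social_cost pe c f.
  apply: le_trans (social_cost_ge_critical f_eq.1); rewrite ler_wpM2l ?subr_ge0 // lerDl.
  by rewrite mulr_ge0 ?sumr_ge0 // => [|e _]; [exact: ltW|rewrite exprn_ge0 ?sumr_ge0].
have eq_le := wardrop_cost_le_critical f_eq g_avoid; rewrite critical_cost_scale in eq_le.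
set Eq := social_cost pe c f in f_crit eq_le *; set S := M ^+ D.+1 in eq_le *.
set Hf := critical_cost f in f_crit eq_le; set Hg := critical_cost g1 in g1_le eq_le.
have S_ge0 : 0 <= S by rewrite exprn_ge0 // ltW.
have D1_gt0 : 0 < D.+1%:R :> R by rewrite ltr0n.
have {}eq_le : D.+1%:R * Eq <= (1 + eta) * (S * Hg + D%:R * Hf) + D.+1%:R * (2 * #|E|%:R * eta * S).
  apply: le_trans (ler_wpM2l (ltW D1_gt0) eq_le) _.
  by rewrite le_eqVlt; apply/orP; left; apply/eqP; field; rewrite gt_eqF.
have eta_lt : 0 < 1 + eta by have := eta_gt0; lra.
have eta_ge : 0 <= 1 - eta by have := eta_le1; lra.
have hA := ler_wpM2l eta_ge eq_le.
have hB := ler_wpM2l (mulr_ge0 (mulr_ge0 eta_ge (ltW eta_lt)) S_ge0) g1_le.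
have hC := ler_wpM2l (mulr_ge0 (ltW eta_lt) (ler0n R D)) f_crit.
rewrite -[D.+1%:R]natr1 in hA; lra.
Qed.

Lemma PoA_le_ratio (f : P -> R) : wardrop_eq pe c M f -> M <= subcritical_threshold eta ->
  (2 * D%:R + 1) * eta < 1 ->
  PoA pe c M f <= ((1 + eta) ^+ 2 + 2 * (D%:R + 1) * #|E|%:R / critical_opt * eta)
                  / ((1 - (2 * D%:R + 1) * eta) * (1 - eta)).
Proof.
move=> f_eq M_small k_eta; have opt_gt0 := critical_opt_gt0.
have eta_lt1 : eta < 1.
  apply: le_lt_trans k_eta; apply: ler_peMl; first exact: ltW.
  by have := ler0n R D; lra.
have b_gt0 : 0 < (1 - eta) ^+ 2 * critical_opt * M ^+ D.+1.
  by rewrite !mulr_gt0 ?exprn_gt0 // subr_gt0.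
have opt_ge g (g_feas : feasible M g) := social_cost_ge_opt g_feas M_small.
apply: le_trans (PoA_le cost_ge0 f_eq b_gt0 opt_ge) _.
have bound_b (S : R) : ((1 + eta) ^+ 2 + 2 * (D%:R + 1) * #|E|%:R / critical_opt * eta)
    / ((1 - (2 * D%:R + 1) * eta) * (1 - eta)) * ((1 - eta) ^+ 2 * critical_opt * S) =
  (1 - eta) * ((1 + eta) ^+ 2 * critical_opt + 2 * (D%:R + 1) * #|E|%:R * eta) * S
    / (1 - (2 * D%:R + 1) * eta).
  by field; rewrite !gt_eqF ?subr_gt0.
rewrite ler_pdivrMr // bound_b ler_pdivlMr ?subr_gt0 // mulrC.
exact: equilibrium_cost_le.
Qed.

End Bounds.

Theorem PoA_light_traffic (feq : R -> P -> R) :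
  (forall M, 0 < M -> wardrop_eq pe c M (feq M)) ->
  (fun M => PoA pe c M (feq M)) @ (0 : R)^'+ --> (1 : R).
Proof.
move=> feq_eq; have opt_gt0 := critical_opt_gt0; have E_gt0 := card_E_gt0.
pose k : R := 2 * D%:R + 1.
have k_gt0 : 0 < k by rewrite /k; have := ler0n R D; lra.
apply: (cvg_upper_envelope (ratio_bound_cvg1 (2 * (D%:R + 1) * #|E|%:R / critical_opt) k)).
have eta_near : \forall eta \near (0 : R)^'+, 0 < eta /\ eta < k^-1.
  by apply: filterS2 _ (nbhs_right_gt _) (nbhs_right_lt (_ : 0 < k^-1)); rewrite ?invr_gt0.
apply: filterS eta_near => eta [eta_gt0 eta_lt].
have k_eta : k * eta < 1 by rewrite mulrC -ltr_pdivlMr // div1r.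
have eta_le1 : eta <= 1.
  apply: le_trans (ltW k_eta); apply: ler_peMl; first exact: ltW.
  by rewrite /k; have := ler0n R D; lra.
have thr_gt0 : 0 < subcritical_threshold eta.
  by rewrite divr_gt0 // mulr_gt0 // exprn_gt0 // divr_gt0 // natrM mulr_gt0 // ltr0n.
near=> M.
have M_gt0 : 0 < M by near: M; exact: nbhs_right_gt.
have close : close_to_leading eta M by near: M; exact: close_to_leading_near.
have M_small : M <= subcritical_threshold eta by near: M; exact: nbhs_right_le.
have f_eq := feq_eq M M_gt0.
by rewrite PoA_ge1 //= PoA_le_ratio.
Unshelve. all: by end_near.
Qed.

End Critical.

End LightTraffic.

Theorem corollary4p4 (R : realType) (V E P : finType)
  (tail head : E -> V) (orig dest : V) (pe : P -> seq E) (c : E -> R -> R)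
  (Hpaths : valid_paths tail head orig dest pe)
  (Hcost : forall e, admissible_cost (c e))
  (Hanalytic : forall e, analytic_at0 (c e))
  (feq : R -> P -> R)
  (Hfeq : forall M, 0 < M -> wardrop_eq pe c M (feq M)) :
  (fun M => PoA pe c M (feq M)) @ (0:R)^'+ --> (1:R).
Proof.
have cost_ge0 e x : 0 <= x -> 0 <= c e x by have [_ _] := Hcost e; apply.
have [a [d lead]] := analytic_leading_terms Hanalytic cost_ge0.
have a_ge0 e := (lead e).1; have c_leading e := (lead e).2.
have [[p p_free]|all_pos] := pselect (exists p, ~~ has (fun e => 0 < a e) (pe p)).
  exact: (PoA_free_path_cvg Hpaths cost_ge0 a_ge0 c_leading p_free Hfeq).
have has_pos p : has (fun e => 0 < a e) (pe p).
  by apply/negPn/negP => p_free; apply: all_pos; exists p.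
have [D [pstar [pstar_deg path_deg]]] := critical_degree_exists Hpaths d has_pos.
have [am am_gt0 am_le] := exists_pos_lower_bound (fun e (a_pos : 0 < a e) => a_pos).
exact: (PoA_light_traffic Hpaths cost_ge0 a_ge0 c_leading pstar_deg path_deg am_gt0 am_le Hfeq).
Qed.
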